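(* Consider the Qs predictor with queue capacity $1$ processing an arbitrary sequence of items $o^{(1)},o^{(2)},\dots$, with probability estimate $Q^{(t)}(i)=1/Y_i^{(t)}$ for every item $i$ that has a counter at time $t$. Then at every time $t\ge2$: (1) for every item $i$ with a counter, $Y_i^{(t)}=1$ if $i=o^{(t-1)}$, and otherwise $Y_i^{(t)}=Y_i^{(t-1)}+1$; (2) there is exactly one item with $Y_i^{(t)}=1$ (equivalently $Q^{(t)}(i)=1$), namely $o^{(t-1)}$, and for every integer $k\ge2$ there is at most one item with $Y_i^{(t)}=k$ (equivalently $Q^{(t)}(i)=1/k$); (3) for every threshold $p>0$, $N(Q^{(t)},p)<1/p$, where $N(Q,p):=|\{i: Q(i)>p\}|$.
   Context: The Qs predictor with queue capacity $1$ keeps, for each item it has observed, a single counter. At each time $t$ (after predicting), it observes $o^{(t)}$ and updates: the counter of $o^{(t)}$ is set to $1$ (created if absent), and the counter of every other item already having a counter is incremented by $1$; no counters are removed. $Y_i^{(t)}$ denotes the value of item $i$'s counter at time $t$, i.e. after the update at time $t-1$ and before the update at time $t$. Items without a counter have estimate $0$. *)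

From mathcomp Require Import all_boot all_order all_algebra.
Set Implicit Arguments. Unset Strict Implicit. Unset Printing Implicit Defensive.
Import Order.TTheory GRing.Theory Num.Theory.

(* Qs predictor with queue capacity 1.
   Items live in an arbitrary eqType T; the observed sequence is o : nat -> T,
   with o t the item observed at time t (times start at 1; o 0 is unused).
   A counter state is a map T -> option nat (None = no counter). *)

Definition qs_update (T : eqType) (c : T -> option nat) (x : T) : T -> option nat :=
  fun i => if i == x then Some 1%N else option_map S (c i).

Fixpoint qs_counters (T : eqType) (o : nat -> T) (n : nat) : T -> option nat :=
  match n with
  | 0 => fun _ => None
  | n'.+1 => qs_update (qs_counters o n') (o n'.+1)
  end.

(* Y o t i = Y_i^{(t)}: after the update at time t-1, before the one at time t *)
Definition Y (T : eqType) (o : nat -> T) (t : nat) : T -> option nat :=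
  qs_counters o t.-1.

Definition Q (R : realFieldType) (T : eqType) (o : nat -> T) (t : nat) (i : T) : R :=
  match Y o t i with
  | Some k => (k%:R)^-1
  | None => 0
  end.

From mathcomp Require Import all_boot all_order all_algebra.
Set Implicit Arguments. Unset Strict Implicit. Unset Printing Implicit Defensive.
Import Order.TTheory GRing.Theory Num.Theory.
Local Open Scope ring_scope.

(* The counters are pairwise distinct and positive: an update resets one
   counter to 1 and shifts all the others by one.  Distinct positive integers
   k_1, ..., k_m include one that is at least m, and Q(i) > p forces
   Y_i < 1/p, whence N(Q, p) < 1/p. *)

Lemma uniq_pos_has_ge_size (s : seq nat) :
  uniq s -> 0%N \notin s -> s != [::] -> has (fun k => size s <= k)%N s.
Proof.
move=> s_uniq s_pos s_nil; apply/negPn/hasPn => s_small.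
have s_size : (0 < size s)%N by rewrite lt0n size_eq0.
have sub_iota : {subset s <= iota 1 (size s).-1}.
  move=> k k_s; rewrite mem_iota add1n prednK //.
  have /= := s_small k k_s; rewrite -ltnNge => ->; rewrite andbT.
  by rewrite lt0n (memPn s_pos).
have := uniq_leq_size s_uniq sub_iota.
by rewrite size_iota leqNgt ltn_predL s_size.
Qed.

Section QsUpdate.
Variables (T : eqType) (c : T -> option nat) (x : T).

Lemma qs_update_neq0 i : qs_update c x i <> Some 0%N.
Proof. by rewrite /qs_update; case: eqP => // _; case: (c i). Qed.

Lemma qs_update_inj :
  (forall i, c i <> Some 0%N) ->
  (forall i j k, c i = Some k -> c j = Some k -> i = j) ->
  forall i j k, qs_update c x i = Some k -> qs_update c x j = Some k -> i = j.
Proof.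
move=> c_neq0 c_inj i j k; rewrite /qs_update.
have shifted_neq1 l : option_map S (c l) <> Some 1%N.
  by case: (c l) (c_neq0 l) => [[|a]|].
case: eqVneq => [->|_]; case: eqVneq => [->|_] //.
- by move=> [<-] /(shifted_neq1 j).
- by move=> + [k1]; rewrite -k1 => /(shifted_neq1 i).
case ci: (c i) => [a|] //; case cj: (c j) => [b|] //= [<-] [ab].
by apply: (c_inj _ _ a); rewrite // cj ab.
Qed.

End QsUpdate.

Lemma Y_succ (T : eqType) (o : nat -> T) t :
  (0 < t)%N -> Y o t.+1 = qs_update (Y o t) (o t).
Proof. by case: t. Qed.

Lemma qs_counters_neq0 (T : eqType) (o : nat -> T) n i :
  qs_counters o n i <> Some 0%N.
Proof. by case: n => [//|n]; apply: qs_update_neq0. Qed.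

Lemma Y_inj (T : eqType) (o : nat -> T) t i j k :
  Y o t i = Some k -> Y o t j = Some k -> i = j.
Proof.
rewrite /Y; elim: t.-1 i j k => [//|n IHn] /=.
by apply: qs_update_inj => //; apply: qs_counters_neq0.
Qed.

Lemma Q_gt_counter (R : realFieldType) (T : eqType) (o : nat -> T) t i (p : R) :
  0 < p -> p < Q R o t i -> exists2 k, Y o t i = Some k.+1 & k.+1%:R < p^-1.
Proof.
rewrite /Q => p_gt0.
case: (Y o t i) => [[|k]|]; [by rewrite invr0 ltNge ltW | | by rewrite ltNge ltW].
by rewrite invf_pgt ?posrE // => ?; exists k.
Qed.

Lemma card_Q_gt (R : realFieldType) (T : eqType) (o : nat -> T) t (p : R) s :
  0 < p -> uniq s -> (forall i, i \in s -> p < Q R o t i) -> (size s)%:R < p^-1.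
Proof.
move=> p_gt0 s_uniq s_Q; have [->|s_nil] := eqVneq s [::]; first by rewrite invr_gt0.
pose counter i := odflt 0%N (Y o t i).
have counterP i : i \in s ->
    [/\ Y o t i = Some (counter i), (0 < counter i)%N & (counter i)%:R < p^-1].
  by move=> /s_Q /(Q_gt_counter p_gt0) [k Yi]; rewrite /counter Yi.
have counters_uniq : uniq (map counter s).
  rewrite map_inj_in_uniq // => i j /counterP [Yi _ _] /counterP [Yj _ _] eq_ij.
  by apply: (Y_inj Yi); rewrite Yj eq_ij.
have counters_pos : 0%N \notin map counter s.
  by apply/mapP => -[i /counterP [_ + _] counter0]; rewrite -counter0.
have counters_nil : map counter s != [::] by rewrite -size_eq0 size_map size_eq0.
have /hasP [_ /mapP [i i_s ->]] :=
  uniq_pos_has_ge_size counters_uniq counters_pos counters_nil.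
rewrite size_map -(ler_nat R) => size_le; have [_ _ counter_lt] := counterP i i_s.
exact: le_lt_trans size_le counter_lt.
Qed.

Theorem lemma12 (R : realFieldType) (T : eqType) (o : nat -> T) (t : nat) :
  (2 <= t)%N ->
  (* (1) *)
  (forall (i : T) (k : nat), Y o t i = Some k ->
     (i = o t.-1 -> k = 1%N) /\
     (i <> o t.-1 -> exists k' : nat, Y o t.-1 i = Some k' /\ k = k'.+1)) /\
  (* (2) *)
  (Y o t (o t.-1) = Some 1%N /\ (forall i : T, Y o t i = Some 1%N -> i = o t.-1) /\
   (forall (k : nat) (i j : T), (2 <= k)%N ->
      Y o t i = Some k -> Y o t j = Some k -> i = j)) /\
  (* (3): N(Q^{(t)}, p) < 1/p, i.e. every duplicate-free list of items i with
     Q^{(t)}(i) > p has fewer than 1/p elements *)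
  (forall p : R, 0 < p ->
     forall s : seq T, uniq s -> (forall i, i \in s -> p < Q R o t i) ->
       (size s)%:R < p^-1).
Proof.
case: t => [|t] // t_gt1; rewrite succnK.
have Y_succE := Y_succ o t_gt1.
have Y_last : Y o t.+1 (o t) = Some 1%N by rewrite Y_succE /qs_update eqxx.
split; last split; last by move=> p p_gt0 s; apply: card_Q_gt.
- move=> i k; rewrite Y_succE /qs_update; case: eqP => [-> [<-] // | i_neq].
  by case: (Y o t i) => //= k' [<-]; split=> [/i_neq | _] //; exists k'.
split; first exact: Y_last.
split; first by move=> i Yi; apply: Y_inj Yi Y_last.
by move=> k i j _; apply: Y_inj.
Qed.
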